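(* Let $k\ge 2$ be an integer and let $q=p^r$ be a prime power with $p>k$. If $A\subset\mathbb{F}_q^n$ has size \[ |A|>(k+1)\cdot\binom{n+(k-1)q}{(k-1)(q-1)}, \] then $A$ contains a $k$-right corner.
   Context: $\mathbb{F}_q^n$ carries the standard bilinear form $\langle u,v\rangle=\sum_{i=1}^n u_iv_i$. Vectors $x_1,\dots,x_k,x_{k+1}\in\mathbb{F}_q^n$ form a $k$-right corner if they are pairwise distinct and the $k$ vectors $x_1-x_{k+1},\dots,x_k-x_{k+1}$ are mutually orthogonal, i.e. $\langle x_i-x_{k+1},x_j-x_{k+1}\rangle=0$ for all $1\le i<j\le k$. *)

From HB Require Import structures.
From mathcomp Require Import all_boot all_order all_algebra all_field.
Set Implicit Arguments. Unset Strict Implicit. Unset Printing Implicit Defensive.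
Import GRing.Theory.
Local Open Scope ring_scope.

Definition dotv (F : fieldType) (n : nat) (u v : 'rV[F]_n) : F :=
  \sum_(i < n) u 0 i * v 0 i.

(* x : 'I_(k+1) -> F^n; x (widen i) for i < k are x_1..x_k, x ord_max is x_{k+1}.
   A k-right corner: pairwise distinct, and the x_i - x_{k+1} (i <= k) are
   mutually orthogonal. *)
Definition right_corner (F : fieldType) (n k : nat) (x : 'I_k.+1 -> 'rV[F]_n) : Prop :=
  injective x /\
  forall i j : 'I_k, i != j ->
    dotv (x (widen_ord (leqnSn k) i) - x ord_max)
         (x (widen_ord (leqnSn k) j) - x ord_max) = 0.

From HB Require Import structures.
From mathcomp Require Import all_boot all_order all_algebra all_field.
From Stdlib Require Import Classical ClassicalEpsilon.
Set Implicit Arguments. Unset Strict Implicit. Unset Printing Implicit Defensive.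
Import GRing.Theory.
Local Open Scope ring_scope.

(* Peel apices of [(k-1)]-corners off a [k]-corner-free set [A] one at a time.
   For a corner [x] with apex [z], [y |-> prod_i (1 - <x_i - z, y - z>^(q-1))] is
   a polynomial of degree [(k-1)(q-1)] that is [1] at [z] and vanishes at every
   other point of [A] outside [x], since such a point orthogonal to all legs
   would extend [x] to a [k]-corner.  In particular it vanishes at the apices
   removed earlier, so the removed apices carry a triangular family of such
   polynomials and there are at most [C((k-1)(q-1) + n, n)] of them.  What is
   left is [(k-1)]-corner-free, and induction on [k] gives
   [|A| <= k * C((k-1)(q-1) + n, n)]. *)

Section Span.
Variables (F : fieldType) (T : Type) (E : finType) (g : E -> T -> F).

Definition spanned (f : T -> F) :=
  exists c : E -> F, forall y, f y = \sum_e c e * g e y.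

Lemma triangular_leq_card m (y : 'I_m -> T) (f : 'I_m -> T -> F) :
  (forall s, spanned (f s)) -> (forall s, f s (y s) != 0) ->
  (forall s t : 'I_m, (t < s)%N -> f s (y t) = 0) -> (m <= #|E|)%N.
Proof.
move=> f_span f_diag f_tri.
have [c fE] : {c : 'I_m -> E -> F | forall s y0, f s y0 = \sum_e c s e * g e y0}.
  exists (fun s => sval (constructive_indefinite_description _ (f_span s))) => s.
  exact: svalP (constructive_indefinite_description _ (f_span s)).
pose G : 'M[F]_(m, #|E|) := \matrix_(t, e) g (enum_val e) (y t).
pose C : 'M[F]_(#|E|, m) := \matrix_(e, s) c s (enum_val e).
have GC t s : (G *m C) t s = f s (y t).
  rewrite mxE fE (big_enum_val (fun e => c s e * g e (y t))).
  by apply: eq_bigr => e _; rewrite !mxE mulrC.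
have GC_trig : is_trig_mx (G *m C) by apply/is_trig_mxP => t s lt_st; rewrite GC f_tri.
have GC_unit : G *m C \in unitmx.
  by rewrite unitmxE det_trig // unitfE; apply/prodf_neq0 => s _; rewrite GC.
by have := mulmx_max_rank G C; rewrite mxrank_unit.
Qed.

End Span.

Section PolyFun.
Variables (F : fieldType) (n : nat).

(* Coordinates of [y] in the projective closure: [y] followed by [1]. *)
Definition hcoord (y : 'rV[F]_n) (l : 'I_n.+1) : F :=
  if unlift ord_max l is Some i then y 0 i else 1.

Definition monomial (s : seq 'I_n.+1) (y : 'rV[F]_n) : F := \prod_(l <- s) hcoord y l.

(* Polynomial functions of degree at most [d], written as homogeneous forms of
   degree [d] in [hcoord y]. *)
Definition polyfun_le (d : nat) (g : 'rV[F]_n -> F) :=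
  exists L : seq (F * d.-tuple 'I_n.+1),
    forall y, g y = \sum_(c <- L) c.1 * monomial c.2 y.

Lemma eq_polyfun_le d g h : g =1 h -> polyfun_le d g -> polyfun_le d h.
Proof. by move=> gh [L gE]; exists L => y; rewrite -gh. Qed.

Lemma polyfun_le_sub d g h :
  polyfun_le d g -> polyfun_le d h -> polyfun_le d (fun y => g y - h y).
Proof.
move=> [L1 gE] [L2 hE]; exists (L1 ++ [seq (- c.1, c.2) | c <- L2]) => y.
by rewrite big_cat big_map gE hE -sumrN; congr (_ + _); apply: eq_bigr => c _; rewrite mulNr.
Qed.

Lemma polyfun_le_mul d1 d2 g h : polyfun_le d1 g -> polyfun_le d2 h ->
  polyfun_le (d1 + d2) (fun y => g y * h y).
Proof.
move=> [L1 gE] [L2 hE].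
exists [seq (a.1 * b.1, cat_tuple a.2 b.2) | a <- L1, b <- L2] => y.
rewrite gE hE big_distrlr big_allpairs_dep /=.
by apply: eq_bigr => a _; apply: eq_bigr => b _; rewrite /monomial big_cat mulrACA.
Qed.

Lemma polyfun_le_one : polyfun_le 0 (fun _ => 1).
Proof. by exists [:: (1, [tuple])] => y; rewrite big_seq1 mul1r /monomial big_nil. Qed.

Lemma polyfun_le_exp d g m : polyfun_le d g -> polyfun_le (d * m) (fun y => g y ^+ m).
Proof.
move=> gP; elim: m => [|m IHm].
  by rewrite muln0; apply: eq_polyfun_le polyfun_le_one => y; rewrite expr0.
by rewrite mulnS; apply: eq_polyfun_le (polyfun_le_mul gP IHm) => y; rewrite exprS.
Qed.

Lemma polyfun_le_prod (I : finType) d (G : I -> 'rV[F]_n -> F) :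
  (forall i, polyfun_le d (G i)) -> polyfun_le (d * #|I|) (fun y => \prod_i G i y).
Proof.
move=> GP; suff /(_ (enum I)) :
    forall r, polyfun_le (d * size r) (fun y => \prod_(i <- r) G i y).
  by rewrite -cardE; apply: eq_polyfun_le => y; rewrite big_enum.
elim=> [|i r IHr] /=.
  by rewrite muln0; apply: eq_polyfun_le polyfun_le_one => y; rewrite big_nil.
by rewrite mulnS; apply: eq_polyfun_le (polyfun_le_mul (GP i) IHr) => y; rewrite big_cons.
Qed.

Lemma polyfun_le_linear (c : 'I_n.+1 -> F) :
  polyfun_le 1 (fun y => \sum_l c l * hcoord y l).
Proof.
exists [seq (c l, [tuple l]) | l <- enum 'I_n.+1] => y.
by rewrite big_map big_enum; apply: eq_bigr => l _; rewrite /monomial big_seq1.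
Qed.

Lemma polyfun_le_affine (a : 'rV[F]_n) (b : F) : polyfun_le 1 (fun y => dotv a y + b).
Proof.
pose c l := if unlift ord_max l is Some i then a 0 i else b.
apply: eq_polyfun_le (polyfun_le_linear c) => y.
rewrite big_ord_recr /= /c /hcoord unlift_none mulr1; congr (_ + _).
apply: eq_bigr => i _; suff -> : widen_ord (leqnSn n) i = lift ord_max i by rewrite liftK.
by apply: val_inj; rewrite /= /bump leqNgt ltn_ord.
Qed.

Lemma polyfun_le_cst1 d : polyfun_le d (fun _ => 1).
Proof.
have one1 : polyfun_le 1 (fun _ => 1).
  apply: eq_polyfun_le (polyfun_le_affine 0 1) => y.
  by rewrite /dotv big1 ?add0r // => i _; rewrite mxE mul0r.
by rewrite -[d]mul1n; apply: eq_polyfun_le (polyfun_le_exp d one1) => y; rewrite expr1n.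
Qed.

Definition sorted_tuple d := {t : d.-tuple 'I_n.+1 | sorted leq (map val t)}.

Lemma card_sorted_tuple d : #|{: sorted_tuple d}| = 'C(d + n, d).
Proof. by rewrite card_sig -card_sorted_tuples cardsE. Qed.

Lemma polyfun_le_spanned d g :
  polyfun_le d g -> spanned (fun t : sorted_tuple d => monomial (val t)) g.
Proof.
move=> [L gE]; pose leo (a b : 'I_n.+1) := (a <= b)%N.
exists (fun t : sorted_tuple d => \sum_(c <- L | sort leo c.2 == val (val t)) c.1) => y.
rewrite gE; symmetry; under eq_bigr do rewrite big_distrl big_mkcond /=.
rewrite exchange_big /=; apply: eq_bigr => c _.
have size_sort_c : size (sort leo c.2) == d by rewrite size_sort size_tuple.
have sorted_sort_c : sorted leq (map val (Tuple size_sort_c)).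
  by rewrite sorted_map; apply: sort_sorted => a b; apply: leq_total.
pose t_c : sorted_tuple d := exist _ (Tuple size_sort_c) sorted_sort_c.
rewrite (bigD1 t_c) //= eqxx big1 ?addr0.
  by congr (_ * _); apply: perm_big; rewrite perm_sort.
move=> t t_neq; case: ifP => // /eqP sort_c; case/eqP: t_neq.
by apply/val_inj/val_inj; rewrite /= -sort_c.
Qed.

Lemma triangular_polyfun_leq_bin d m (y : 'I_m -> 'rV[F]_n) (f : 'I_m -> 'rV[F]_n -> F) :
  (forall s, polyfun_le d (f s)) -> (forall s, f s (y s) != 0) ->
  (forall s t : 'I_m, (t < s)%N -> f s (y t) = 0) -> (m <= 'C(d + n, d))%N.
Proof.
move=> f_deg; rewrite -card_sorted_tuple; apply: triangular_leq_card => s.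
exact: polyfun_le_spanned.
Qed.

End PolyFun.

Lemma leq_bin_diag n d1 d2 : (d1 <= d2)%N -> ('C(d1 + n, d1) <= 'C(d2 + n, d2))%N.
Proof.
have binE d : 'C(d + n, d) = 'C(d + n, n) by rewrite -{2}(addnK n d) bin_sub ?leq_addl.
by move=> le_d12; rewrite !binE leq_bin2l // leq_add2r.
Qed.

Section Dotv.
Variables (F : fieldType) (n : nat).
Implicit Types u v w : 'rV[F]_n.

Lemma dotvC u v : dotv u v = dotv v u.
Proof. by apply: eq_bigr => i _; rewrite mulrC. Qed.

Lemma dotvBr u v w : dotv u (v - w) = dotv u v - dotv u w.
Proof. by rewrite /dotv -sumrB; apply: eq_bigr => i _; rewrite !mxE mulrBr. Qed.

Lemma dotv0r u : dotv u 0 = 0.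
Proof. by rewrite /dotv big1 // => i _; rewrite mxE mulr0. Qed.

End Dotv.

Section Ocons.
Variables (T : Type) (m : nat).

Definition ocons (a : T) (b : 'I_m -> T) (i : 'I_m.+1) : T :=
  if unlift ord0 i is Some i' then b i' else a.

Lemma ocons0 a b : ocons a b ord0 = a.
Proof. by rewrite /ocons unlift_none. Qed.

Lemma oconsS a b i : ocons a b (lift ord0 i) = b i.
Proof. by rewrite /ocons liftK. Qed.

End Ocons.

Lemma ocons_inj (T : eqType) m (a : T) (b : 'I_m -> T) :
  injective b -> (forall i, b i != a) -> injective (ocons a b).
Proof.
move=> b_inj b_neq i j.
case: (unliftP ord0 i) => [i' ->|->]; case: (unliftP ord0 j) => [j' ->|->] //;
  rewrite ?ocons0 ?oconsS.
- by move/b_inj ->.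
- by move=> b_eq; case/eqP: (b_neq i').
- by move=> b_eq; case/eqP: (b_neq j').
Qed.

Section Corners.
Variables (F : finFieldType) (n : nat).
Implicit Types (k : nat) (C : {set 'rV[F]_n}).

Lemma expf_card_pred (a : F) : a != 0 -> a ^+ #|F|.-1 = 1.
Proof.
move=> a_neq0; apply: (mulfI a_neq0); rewrite mulr1 -exprS prednK ?expf_card //.
exact: ltnW (finNzRing_gt1 F).
Qed.

Definition corner_free k C :=
  forall x : 'I_k.+1 -> 'rV[F]_n, (forall i, x i \in C) -> ~ right_corner x.

Definition leg k (x : 'I_k.+1 -> 'rV[F]_n) (i : 'I_k) : 'rV[F]_n :=
  x (widen_ord (leqnSn k) i) - x ord_max.

(* By Fermat, the indicator of [y - x ord_max] being orthogonal to all legs of [x]. *)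
Definition corner_poly k (x : 'I_k.+1 -> 'rV[F]_n) (y : 'rV[F]_n) : F :=
  \prod_(i < k) (1 - dotv (leg x i) (y - x ord_max) ^+ #|F|.-1).

Lemma polyfun_le_corner_poly k x : polyfun_le (#|F|.-1 * k) (@corner_poly k x).
Proof.
suff /polyfun_le_prod : forall i : 'I_k,
    polyfun_le #|F|.-1 (fun y => 1 - dotv (leg x i) (y - x ord_max) ^+ #|F|.-1).
  by rewrite card_ord.
move=> i; apply: polyfun_le_sub.
  exact: polyfun_le_cst1.
have := polyfun_le_exp #|F|.-1 (polyfun_le_affine (leg x i) (- dotv (leg x i) (x ord_max))).
by rewrite mul1n; apply: eq_polyfun_le => y; rewrite dotvBr.
Qed.

Lemma corner_poly_apex k x : @corner_poly k x (x ord_max) = 1.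
Proof.
rewrite /corner_poly big1 // => i _; rewrite subrr dotv0r expr0n.
by case: #|F| (finNzRing_gt1 F) => [|[|q]] //= _; rewrite subr0.
Qed.

Lemma corner_poly_neq0 k x y : @corner_poly k x y != 0 ->
  forall i, dotv (leg x i) (y - x ord_max) = 0.
Proof.
move=> poly_neq0 i; apply: contraNeq poly_neq0 => dot_neq0.
by rewrite /corner_poly (bigD1 i) //= expf_card_pred // subrr mul0r.
Qed.

Lemma right_corner_ocons k (x : 'I_k.+1 -> 'rV[F]_n) w :
  right_corner x -> (forall i, x i != w) ->
  (forall i, dotv (leg x i) (w - x ord_max) = 0) -> right_corner (ocons w x).
Proof.
move=> [x_inj x_orth] x_neq w_orth; split; first exact: ocons_inj.
have legE (i : 'I_k.+1) : leg (ocons w x) i =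
    if unlift ord0 i is Some i' then leg x i' else w - x ord_max.
  have max_lift : (ord_max : 'I_k.+2) = lift ord0 ord_max by apply: val_inj.
  rewrite /leg max_lift oconsS; case: (unliftP ord0 i) => [i' ->|->].
    have -> : widen_ord (leqnSn k.+1) (lift ord0 i') = lift ord0 (widen_ord (leqnSn k) i').
      exact: val_inj.
    by rewrite oconsS.
  have -> : widen_ord (leqnSn k.+1) ord0 = ord0 by apply: val_inj.
  by rewrite ocons0.
move=> i j ij_neq; change (dotv (leg (ocons w x) i) (leg (ocons w x) j) = 0).
move: ij_neq; rewrite !legE.
case: (unliftP ord0 i) => [i' ->|->]; case: (unliftP ord0 j) => [j' ->|->];
  rewrite ?liftK ?unlift_none ?eqxx // => ij_neq.
- by apply: x_orth; apply: contraNneq ij_neq => ->.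
- by rewrite dotvC w_orth.
Qed.

Lemma corner_poly_vanish k A (x : 'I_k.+1 -> 'rV[F]_n) w :
  corner_free k.+1 A -> (forall i, x i \in A) -> right_corner x ->
  w \in A -> (forall i, x i != w) -> corner_poly x w = 0.
Proof.
move=> A_free xA x_corner wA x_neq; apply/eqP/negPn/negP => poly_neq0.
apply: (A_free (ocons w x)); first by move=> i; rewrite /ocons; case: unlift.
by apply: right_corner_ocons => //; apply: corner_poly_neq0.
Qed.

Lemma corner_free0 C : corner_free 0 C -> C = set0.
Proof.
move=> C_free; apply/setP => z; rewrite inE; apply/negP => zC.
apply: (C_free (fun _ => z)) => //; split=> [i j _|[]//].
by rewrite (ord1 i) (ord1 j).
Qed.

(* The [y s] are the removed apices and the [f s] their corner polynomials; the
   fourth clause is the invariant that makes the induction on [#|C|] go through. *)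
Lemma corner_peeling k A C : corner_free k.+1 A -> C \subset A ->
  exists m (y : 'I_m -> 'rV[F]_n) (f : 'I_m -> 'rV[F]_n -> F),
  [/\ forall s, polyfun_le (#|F|.-1 * k) (f s),
      forall s, f s (y s) != 0,
      forall s t : 'I_m, (t < s)%N -> f s (y t) = 0,
      forall s, {in A :\: C, forall w, f s w = 0} &
      exists2 C', corner_free k C' & (#|C| <= m + #|C'|)%N].
Proof.
move=> A_free; have [N] := ubnP #|C|; elim: N C => // N IHN C C_N CA.
have [C_free|C_corner] := classic (corner_free k C).
  exists 0%N, (fun _ => 0), (fun _ _ => 0); split; try by case.
  by exists C.
have [x [xC x_corner]] :
    exists x : 'I_k.+1 -> 'rV[F]_n, (forall i, x i \in C) /\ right_corner x.
  by apply: NNPP => no_corner; apply: C_corner => x xC x_corner; apply: no_corner; exists x.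
set z := x ord_max; have zC : z \in C := xC ord_max.
have Cz_N : (#|C :\ z| < N)%N by move: C_N; rewrite (cardsD1 z) zC.
have CzA : C :\ z \subset A by apply: subset_trans CA; apply: subD1set.
have [m [y [f [f_deg f_diag f_tri f_out [C' C'_free C'_card]]]]] := IHN _ Cz_N CzA.
exists m.+1, (ocons z y), (ocons (corner_poly x) f); split.
- by move=> s; case: (unliftP ord0 s) => [s' ->|->]; rewrite ?oconsS ?ocons0 //;
    apply: polyfun_le_corner_poly.
- move=> s; case: (unliftP ord0 s) => [s' ->|->]; rewrite ?oconsS ?ocons0 //.
  by rewrite corner_poly_apex oner_eq0.
- move=> s t; case: (unliftP ord0 s) => [s' ->|->] //; rewrite oconsS.
  case: (unliftP ord0 t) => [t' ->|-> _]; rewrite ?oconsS ?ocons0; first exact: f_tri.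
  by apply: f_out; rewrite !inE eqxx (subsetP CA).
- move=> s w; rewrite inE => /andP [wC wA].
  case: (unliftP ord0 s) => [s' ->|->]; rewrite ?oconsS ?ocons0.
    by apply: f_out; rewrite !inE wA andbT negb_and wC orbT.
  apply: corner_poly_vanish (A_free) _ x_corner wA _ => [i|i].
    exact: (subsetP CA).
  by apply: contraNneq wC => <-.
by exists C' => //; rewrite (cardsD1 z) zC add1n addSn ltnS.
Qed.

Lemma card_corner_free k C :
  corner_free k C -> (#|C| <= k * 'C(#|F|.-1 * k.-1 + n, #|F|.-1 * k.-1))%N.
Proof.
elim: k C => [|k IHk] C C_free; first by rewrite (corner_free0 C_free) cards0.
have [m [y [f [f_deg f_diag f_tri _ [C' C'_free C'_card]]]]] :=
  corner_peeling C_free (subxx C).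
have m_le := triangular_polyfun_leq_bin f_deg f_diag f_tri.
have C'_le : (#|C'| <= k * 'C(#|F|.-1 * k + n, #|F|.-1 * k))%N.
  apply: leq_trans (IHk _ C'_free) (leq_mul (leqnn k) (leq_bin_diag n _)).
  by rewrite leq_mul2l leq_pred orbT.
by apply: leq_trans C'_card _; rewrite mulSn leq_add.
Qed.

End Corners.

Theorem theorem2 (F : finFieldType) (p r n k : nat)
  (hp : prime p) (hchar : p \in [pchar F]) (hq : #|F| = (p ^ r)%N)
  (hk : (2 <= k)%N) (hpk : (k < p)%N)
  (A : {set 'rV[F]_n})
  (hA : ((k + 1) * 'C(n + (k - 1) * #|F|, (k - 1) * (#|F| - 1)) < #|A|)%N) :
  exists x : 'I_k.+1 -> 'rV[F]_n, (forall i, x i \in A) /\ right_corner x.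
Proof.
apply: NNPP => no_corner.
have A_free : corner_free k A by move=> x xA x_corner; apply: no_corner; exists x.
have bin_le : ('C(#|F|.-1 * k.-1 + n, #|F|.-1 * k.-1)
               <= 'C(n + (k - 1) * #|F|, (k - 1) * (#|F| - 1)))%N.
  rewrite !subn1 (mulnC k.-1 #|F|.-1); apply: leq_bin2l.
  by rewrite addnC leq_add2l mulnC leq_mul2l leq_pred orbT.
move: hA; rewrite ltnNge => /negP; apply.
by apply: leq_trans (card_corner_free A_free) _; rewrite addn1 leq_mul.
Qed.
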